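(* Let $M$ be a nontrivial monoid with identity $e$, $X$ a set and $\tau,\tau'$ topologies on $X$ with $\tau'$ strictly finer than $\tau$. In $\mathscr{C}=\mathbf{Top}$, let $\alpha$ be the partial action datum of $M$ on $(X,\tau)$ given by $\alpha(e)=[(X,\tau),\mathrm{id}_X,\mathrm{id}_X]$ and $\alpha(m)=[(X,\tau'),\mathrm{id}_X,\mathrm{id}_X]$ for $m\neq e$ (where $\mathrm{id}_X\colon(X,\tau')\to(X,\tau)$ is the continuous identity map). Then $\alpha$ is a strong partial action of $M$ on $(X,\tau)$, but $\alpha$ is not the restriction of any global action of $M$ on any space $(Y,\upsilon)$ via any monomorphism $\iota\colon(X,\tau)\to(Y,\upsilon)$ in $\mathbf{Top}$.
   Context: A partial action datum of $M$ on an object $X$ of a category with pullbacks $\mathscr{C}$ assigns to each $m\in M$ an isomorphism class of spans $[\operatorname{dom}\alpha_m,\iota_m,\alpha_m]$ with $\iota_m\colon\operatorname{dom}\alpha_m\to X$ a monomorphism and $\alpha_m\colon\operatorname{dom}\alpha_m\to X$ (isomorphism of spans: an isomorphism of apexes commuting with both legs). For $m,n\in M$, let $\alpha_m^{-1}(\operatorname{dom}\alpha_n)$ be a pullback of $\alpha_m$ and $\iota_n$ with projections $\hat\iota^m_n$ to $\operatorname{dom}\alpha_m$ and $\hat\alpha^n_m$ to $\operatorname{dom}\alpha_n$, and $\operatorname{dom}\alpha_m\cap\operatorname{dom}\alpha_k$ a pullback of $\iota_m$ and $\iota_k$ with projections $\pi^{m,k}_1$ to $\operatorname{dom}\alpha_m$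 and $\pi^{m,k}_2$ to $\operatorname{dom}\alpha_k$. A strong partial action is a datum with $\alpha(e)=[X,\mathrm{id}_X,\mathrm{id}_X]$ such that for all $m,n$ there is an isomorphism $\theta\colon\alpha_m^{-1}(\operatorname{dom}\alpha_n)\to\operatorname{dom}\alpha_m\cap\operatorname{dom}\alpha_{nm}$ with $\iota_{nm}\circ\pi^{m,nm}_2\circ\theta=\iota_m\circ\hat\iota^m_n$ and $\alpha_{nm}\circ\pi^{m,nm}_2\circ\theta=\alpha_n\circ\hat\alpha^n_m$. A global action of $M$ on $Y$ is a family of morphisms $\beta_m\colon Y\to Y$ with $\beta_e=\mathrm{id}_Y$, $\beta_n\circ\beta_m=\beta_{nm}$. Given a global action $\beta$ on $Y$ and a monomorphism $\iota\colon X\to Y$, the restriction of $\beta$ via $\iota$ is the datum $\alpha$ on $X$ such that for each $m$ the square $\beta_m\circ\iota\circ\iota_m=\iota\circ\alpha_m$ is a pullback. *)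

From Stdlib Require Import Classical ClassicalDescription.

Set Implicit Arguments.

Record topology (X : Type) := Topology {
  opn : (X -> Prop) -> Prop;
  opn_full : opn (fun _ => True);
  opn_inter : forall U V, opn U -> opn V -> opn (fun x => U x /\ V x);
  opn_union : forall (I : Type) (F : I -> X -> Prop),
      (forall i, opn (F i)) -> opn (fun x => exists i, F i x)
}.

Record Top := mkTop { carrier :> Type; topo : topology carrier }.

Definition cont {A B : Top} (f : A -> B) : Prop :=
  forall U, opn (topo B) U -> opn (topo A) (fun x => U (f x)).

Definition iso {A B : Top} (f : A -> B) : Prop :=
  cont f /\ exists g : B -> A, cont g /\
    (forall x, g (f x) = x) /\ (forall y, f (g y) = y).

Definition mono {A B : Top} (f : A -> B) : Prop :=
  cont f /\
  forall (Z : Top) (g h : Z -> A), cont g -> cont h ->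
    (forall z, f (g z) = f (h z)) -> forall z, g z = h z.

Definition is_pullback {A B C P : Top} (f : A -> C) (g : B -> C)
    (p1 : P -> A) (p2 : P -> B) : Prop :=
  cont p1 /\ cont p2 /\ (forall z, f (p1 z) = g (p2 z)) /\
  forall (Z : Top) (q1 : Z -> A) (q2 : Z -> B), cont q1 -> cont q2 ->
    (forall z, f (q1 z) = g (q2 z)) ->
    exists u : Z -> P, cont u /\ (forall z, p1 (u z) = q1 z) /\
      (forall z, p2 (u z) = q2 z) /\
      forall v : Z -> P, cont v -> (forall z, p1 (v z) = q1 z) ->
        (forall z, p2 (v z) = q2 z) -> forall z, v z = u z.

(* A span X <- D -> X (a representative of its isomorphism class) *)
Record span (X : Top) := Span {
  apex : Top;
  leg_i : apex -> X;
  leg_a : apex -> X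
}.

Definition span_iso {X : Top} (s t : span X) : Prop :=
  exists h : apex s -> apex t, iso h /\
    (forall z, leg_i t (h z) = leg_i s z) /\
    (forall z, leg_a t (h z) = leg_a s z).

Definition id_span (X : Top) : span X := @Span X X (fun x => x) (fun x => x).

Definition partial_action_datum {M : Type} {X : Top} (al : M -> span X) : Prop :=
  forall m, mono (leg_i (al m)) /\ cont (leg_a (al m)).

Definition strong_partial_action {M : Type} (mul : M -> M -> M) (e : M)
    {X : Top} (al : M -> span X) : Prop :=
  partial_action_datum al /\
  span_iso (al e) (id_span X) /\
  forall m n : M,
  forall (P1 : Top) (hi : P1 -> apex (al m)) (ha : P1 -> apex (al n)),
    is_pullback (leg_a (al m)) (leg_i (al n)) hi ha ->
  forall (P2 : Top) (pi1 : P2 -> apex (al m)) (pi2 : P2 -> apex (al (mul n m))),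
    is_pullback (leg_i (al m)) (leg_i (al (mul n m))) pi1 pi2 ->
  exists theta : P1 -> P2, iso theta /\
    (forall z, leg_i (al (mul n m)) (pi2 (theta z)) = leg_i (al m) (hi z)) /\
    (forall z, leg_a (al (mul n m)) (pi2 (theta z)) = leg_a (al n) (ha z)).

Definition global_action {M : Type} (mul : M -> M -> M) (e : M) {Y : Top}
    (be : M -> Y -> Y) : Prop :=
  (forall m, cont (be m)) /\ (forall y, be e y = y) /\
  (forall m n y, be n (be m y) = be (mul n m) y).

Definition restriction_of {M : Type} {X Y : Top} (be : M -> Y -> Y)
    (iota : X -> Y) (al : M -> span X) : Prop :=
  forall m, is_pullback (fun x => be m (iota x)) iota (leg_i (al m)) (leg_a (al m)).

Definition alpha_ex {M : Type} (e : M) (X : Type) (tau tau' : topology X)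
    (m : M) : span (mkTop tau) :=
  if excluded_middle_informative (m = e)
  then @Span (mkTop tau) (mkTop tau) (fun x => x) (fun x => x)
  else @Span (mkTop tau) (mkTop tau') (fun x => x) (fun x => x).

From Stdlib Require Import Classical ClassicalDescription FunctionalExtensionality.

(* Every span of the datum in the theorem has the same shape: both legs are
   the identity of the set X, from X equipped with some topology sigma finer
   than tau, to (X, tau).
   The theorem follows: the datum alpha is identity-legged with sigma_e = tau
   and sigma_m = tau' otherwise, so it is a strong partial action, while a
   globalization would make the strictly finer tau' coarser than tau. *)

Lemma cont_id (A : Top) : cont (fun x : A => x).
Proof. intros U HU; exact HU. Qed.

Lemma cont_comp {A B C : Top} {f : A -> B} {g : B -> C} :
  cont f -> cont g -> cont (fun x => g (f x)).
Proof. intros cf cg U HU; exact (cf _ (cg U HU)). Qed.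

Lemma mono_of_injective (A B : Top) (f : A -> B) :
  cont f -> (forall x y, f x = f y -> x = y) -> mono f.
Proof. intros cf inj; split; [exact cf|]. intros Z g h _ _ H z; apply inj, H. Qed.

(* An endomorphism of a pullback preserving both projections is the
   identity, by uniqueness of the factorization of the pullback cone. *)
Lemma pullback_endo_id {A B C P : Top} {f : A -> C} {g : B -> C}
  {p1 : P -> A} {p2 : P -> B} {w : P -> P} :
  is_pullback f g p1 p2 -> cont w ->
  (forall z, p1 (w z) = p1 z) -> (forall z, p2 (w z) = p2 z) ->
  forall z, w z = z.
Proof.
  intros [c1 [c2 [comm univ]]] cw H1 H2 z.
  destruct (univ P p1 p2 c1 c2 comm) as [u [_ [_ [_ uniq]]]].
  transitivity (u z); [now apply uniq|].
  symmetry; now apply (uniq (fun z => z) (cont_id P)).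
Qed.

Lemma pullback_comparison_iso {A B C P A' B' C' Q : Top}
  {f : A -> C} {g : B -> C} {p1 : P -> A} {p2 : P -> B}
  {f' : A' -> C'} {g' : B' -> C'} {q1 : Q -> A'} {q2 : Q -> B'}
  {u : P -> Q} {v : Q -> P} :
  is_pullback f g p1 p2 -> is_pullback f' g' q1 q2 -> cont u -> cont v ->
  (forall z, p1 (v (u z)) = p1 z) -> (forall z, p2 (v (u z)) = p2 z) ->
  (forall y, q1 (u (v y)) = q1 y) -> (forall y, q2 (u (v y)) = q2 y) ->
  iso u.
Proof.
  intros HP HQ cu cv Pu1 Pu2 Qv1 Qv2.
  split; [exact cu|]. exists v. split; [exact cv|]. split.
  - exact (pullback_endo_id HP (cont_comp cu cv) Pu1 Pu2).
  - exact (pullback_endo_id HQ (cont_comp cv cu) Qv1 Qv2).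
Qed.

Section IdentityLegs.

Context {X : Type} (tau : topology X).

Definition coarser (s t : topology X) : Prop := forall U, opn s U -> opn t U.

Lemma coarser_refl (s : topology X) : coarser s s.
Proof. intros U HU; exact HU. Qed.

Definition id_leg_span (s : topology X) : span (mkTop tau) :=
  @Span (mkTop tau) (mkTop s) (fun x => x) (fun x => x).

Lemma id_cont {s t : topology X} :
  coarser t s -> cont (A := mkTop s) (B := mkTop t) (fun x => x).
Proof. intros H U HU; exact (H U HU). Qed.

(* A map into X that is continuous for s1 and (through an equal map) for s2
   is continuous for any topology coarser than s1 or than s2; this is how
   the projections of a pullback of identity legs are retopologized. *)
Lemma cont_into_either {Z : Top} {p1 p2 : Z -> X} {s1 s2 s : topology X} :
  cont (B := mkTop s1) p1 -> cont (B := mkTop s2) p2 ->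
  (forall z, p1 z = p2 z) -> coarser s s1 \/ coarser s s2 ->
  cont (B := mkTop s) p1.
Proof.
  intros c1 c2 E [H|H] U HU.
  - exact (c1 U (H U HU)).
  - replace (fun z => U (p1 z)) with (fun z => U (p2 z))
      by (apply functional_extensionality; intro z; now rewrite E).
    exact (c2 U (H U HU)).
Qed.

(* If the identity-legged span with apex (X, s) is a pullback of a cospan
   f, g out of (X, tau), then s is coarser than tau: the square forces
   f = g, so the cone of identities of (X, tau) factors through (X, s). *)
Lemma id_leg_pullback_coarser {Y : Top} {s : topology X}
  {f g : mkTop tau -> Y} :
  is_pullback f g (fun x : mkTop s => (x : mkTop tau))
                  (fun x : mkTop s => (x : mkTop tau)) ->
  coarser s tau.
Proof.
  intros [_ [_ [comm univ]]] U HU.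
  destruct (univ (mkTop tau) (fun x => x) (fun x => x)
                 (cont_id _) (cont_id _) comm) as [u [cu [u_id _]]].
  replace U with (fun x => U (u x))
    by (apply functional_extensionality; intro x; now rewrite u_id).
  exact (cu U HU).
Qed.

Section StrongAction.

Variables (M : Type) (mul : M -> M -> M) (e : M) (sigma : M -> topology X).

Hypothesis sigma_finer : forall m, coarser tau (sigma m).
Hypothesis sigma_unit : coarser (sigma e) tau.
(* Nesting conditions making the two pullbacks of the strong-action axiom
   carry the same topology. *)
Hypothesis sigma_product :
  forall m n, coarser (sigma (mul n m)) (sigma m) \/
              coarser (sigma (mul n m)) (sigma n).
Hypothesis sigma_factor :
  forall m n, coarser (sigma n) (sigma m) \/
              coarser (sigma n) (sigma (mul n m)).

Let al (m : M) : span (mkTop tau) := id_leg_span (sigma m).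

Lemma id_leg_datum : partial_action_datum al.
Proof.
  intro m; split.
  - apply mono_of_injective; [exact (id_cont (sigma_finer m))|].
    intros x y H; exact H.
  - exact (id_cont (sigma_finer m)).
Qed.

Lemma id_leg_unit : span_iso (al e) (id_span (mkTop tau)).
Proof.
  exists (fun x => x). split; [split|split; reflexivity].
  - exact (id_cont (sigma_finer e)).
  - exists (fun x => x).
    split; [exact (id_cont sigma_unit)|split; reflexivity].
Qed.

(* Both pullbacks in the axiom have the same points as X and carry the same
   topology, so the factorizations of the pullback cones through each other
   are mutually inverse and identities on points. *)
Lemma id_leg_strong : strong_partial_action mul e al.
Proof.
  split; [exact id_leg_datum|split; [exact id_leg_unit|]].
  intros m n P1 hi ha H1 P2 pi1 pi2 H2.
  pose proof H1 as [c_hi [c_ha [eq1 univ1]]].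
  pose proof H2 as [c_pi1 [c_pi2 [eq2 univ2]]].
  simpl in eq1, eq2.
  assert (c_hi' : cont (B := mkTop (sigma (mul n m))) (fun z => hi z : X))
    by exact (cont_into_either c_hi c_ha eq1 (sigma_product m n)).
  assert (c_pi1' : cont (B := mkTop (sigma n)) (fun z => pi1 z : X))
    by exact (cont_into_either c_pi1 c_pi2 eq2 (sigma_factor m n)).
  destruct (univ2 P1 hi (fun z => hi z) c_hi c_hi' (fun z => eq_refl))
    as [theta [c_theta [theta1 [theta2 _]]]].
  destruct (univ1 P2 pi1 (fun z => pi1 z) c_pi1 c_pi1' (fun z => eq_refl))
    as [back [c_back [back1 [back2 _]]]].
  exists theta. split; [|split].
  - apply (pullback_comparison_iso H1 H2 c_theta c_back); intro z; simpl in *.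
    + now rewrite back1, theta1.
    + now rewrite back2, theta1, eq1.
    + now rewrite theta1, back1.
    + now rewrite theta2, back1, eq2.
  - intro z; simpl; apply theta2.
  - intro z; simpl; rewrite theta2; apply eq1.
Qed.

End StrongAction.

Definition switch_topology {M : Type} (e : M) (tau' : topology X) (m : M)
  : topology X :=
  if excluded_middle_informative (m = e) then tau else tau'.

Lemma switch_unit {M : Type} (e : M) (tau' : topology X) :
  switch_topology e tau' e = tau.
Proof. unfold switch_topology; now destruct (excluded_middle_informative (e = e)). Qed.

Lemma switch_nonunit {M : Type} {e m : M} {tau' : topology X} :
  m <> e -> switch_topology e tau' m = tau'.
Proof. intro Hm; unfold switch_topology; now destruct (excluded_middle_informative (m = e)). Qed.

Lemma switch_between {M : Type} (e m : M) (tau' : topology X) :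
  coarser tau tau' ->
  coarser tau (switch_topology e tau' m) /\ coarser (switch_topology e tau' m) tau'.
Proof.
  intro finer; destruct (classic (m = e)) as [->|Hm].
  - rewrite switch_unit; split; [apply coarser_refl|exact finer].
  - rewrite (switch_nonunit Hm); split; [exact finer|apply coarser_refl].
Qed.

(* The nesting hypotheses of id_leg_strong hold when sigma_m is the finest
   topology of the family for every m <> e: for m = e the products
   reduce to n, otherwise sigma_m dominates. *)
Lemma nesting_of_maximal_off_unit {M : Type} {mul : M -> M -> M} {e : M}
  {sigma : M -> topology X} :
  (forall a, mul a e = a) ->
  (forall m k, m <> e -> coarser (sigma k) (sigma m)) ->
  (forall m n, coarser (sigma (mul n m)) (sigma m) \/
               coarser (sigma (mul n m)) (sigma n)) /\
  (forall m n, coarser (sigma n) (sigma m) \/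
               coarser (sigma n) (sigma (mul n m))).
Proof.
  intros mulm1 maximal; split; intros m n;
    (destruct (classic (m = e)) as [->|Hm];
     [rewrite mulm1; right; apply coarser_refl|left; now apply maximal]).
Qed.

Lemma alpha_ex_id_legs {M : Type} (e : M) (tau' : topology X) :
  alpha_ex e tau tau' = fun m => id_leg_span (switch_topology e tau' m).
Proof.
  apply functional_extensionality; intro m; unfold alpha_ex, switch_topology.
  now destruct (excluded_middle_informative (m = e)).
Qed.

End IdentityLegs.

Theorem mainTheorem18
  (M : Type) (mul : M -> M -> M) (e : M)
  (mulA : forall a b c, mul a (mul b c) = mul (mul a b) c)
  (mul1m : forall a, mul e a = a) (mulm1 : forall a, mul a e = a)
  (nontriv : exists m : M, m <> e)
  (X : Type) (tau tau' : topology X)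
  (finer : forall U, opn tau U -> opn tau' U)
  (strict : exists U, opn tau' U /\ ~ opn tau U) :
  partial_action_datum (alpha_ex e tau tau') /\
  strong_partial_action mul e (alpha_ex e tau tau') /\
  ~ (exists (Y : Top) (be : M -> Y -> Y) (iota : mkTop tau -> Y),
       global_action mul e be /\ mono iota /\
       restriction_of be iota (alpha_ex e tau tau')).
Proof.
  set (sigma := switch_topology tau e tau').
  assert (between : forall m, coarser tau (sigma m) /\ coarser (sigma m) tau')
    by (intro m; exact (switch_between tau e m tau' finer)).
  assert (maximal : forall m k, m <> e -> coarser (sigma k) (sigma m))
    by (intros m k Hm; unfold sigma; rewrite (switch_nonunit tau Hm);
        apply between).
  destruct (nesting_of_maximal_off_unit mulm1 maximal) as [product factor].
  assert (HS : strong_partial_action mul e (fun m => id_leg_span tau (sigma m))).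
  { apply id_leg_strong; [apply between| |exact product|exact factor].
    unfold sigma; rewrite switch_unit; apply coarser_refl. }
  rewrite alpha_ex_id_legs.
  split; [exact (proj1 HS)|split; [exact HS|]].
  intros [Y [be [iota [_ [_ restr]]]]].
  destruct nontriv as [m Hm]; destruct strict as [U [HU not_tau]].
  apply not_tau, (id_leg_pullback_coarser tau (restr m)).
  unfold sigma; rewrite (switch_nonunit tau Hm); exact HU.
Qed.
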